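(* There exist absolute constants $\lambda_0>0$ and $C>0$ such that the following holds for every $0<\lambda\le\lambda_0$. Let $F$ be a bipartite graph with parts $V_0,V_1$, each of size $I$, such that $d_F(v)\ge(1-\lambda)I$ for every $v\in V_0\cup V_1$. Then there exists a probability distribution on perfect matchings $M$ of $F$ (viewed as sets of edges) which is $C/I$-spread, i.e. for every set $T$ of edges of $F$, $\mathbb{P}(M\supseteq T)\le (C/I)^{|T|}$.
   Context: A random set $S$ is $p$-spread if for all sets $T$, $\mathbb{P}(S\supseteq T)\le p^{|T|}$. $d_F(v)$ denotes the degree of $v$ in $F$. *)

From HB Require Import structures.
From mathcomp Require Import all_boot all_order all_algebra.
From Stdlib Require Import Rdefinitions.
From mathcomp Require Import reals Rstruct.
Set Implicit Arguments. Unset Strict Implicit. Unset Printing Implicit Defensive.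
Import Order.TTheory GRing.Theory Num.Theory.
Local Open Scope ring_scope.

(* A bipartite graph with parts V0 = 'I_I and V1 = 'I_I is given by its edge
   set F : {set 'I_I * 'I_I}; an edge (u, w) joins u \in V0 with w \in V1. *)
Definition edge_set (I : nat) := {set 'I_I * 'I_I}.

Definition deg0 (I : nat) (F : edge_set I) (u : 'I_I) : nat :=
  #|[set e in F | e.1 == u]|.
Definition deg1 (I : nat) (F : edge_set I) (w : 'I_I) : nat :=
  #|[set e in F | e.2 == w]|.

Definition perfect_matching (I : nat) (F M : edge_set I) : Prop :=
  M \subset F /\ (forall u, deg0 M u = 1%N) /\ (forall w, deg1 M w = 1%N).

Definition pm_distribution (I : nat) (F : edge_set I)
    (mu : {ffun edge_set I -> R}) : Prop :=
  (forall M, 0 <= mu M)%R /\ (\sum_M mu M = 1)%R /\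
  (forall M, mu M <> 0%R -> perfect_matching F M).

Definition spread (I : nat) (F : edge_set I) (mu : {ffun edge_set I -> R})
    (p : R) : Prop :=
  forall T : edge_set I, T \subset F ->
    (\sum_(M : edge_set I | T \subset M) mu M <= p ^+ #|T|)%R.

(* Let M be a uniformly random perfect matching of F and N(T) the number of perfect
   matchings containing T, so that spreadness reads N(T) I^|T| <= C^|T| N(set0).  Every
   vertex misses at most d = I/16 vertices of the other side.
   - If 2|T| <= I, fix e in T: for M containing T, at least I/4 edges f of M - T have both
     crossing pairs (e.1, f.2), (f.1, e.2) in F, and switching e, f gives a perfect matching
     containing T - e, which determines M and f.  Hence N(T) I/4 <= N(T - e).
   - If 2|T| > I, exchanging T inside M for any perfect matching P of F on the vertices of T
     is injective, so N(T) #P <= N(set0).  Counting matchings of size k+1 from those of size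
     k (adding a free edge while 2k < t, switching one in afterwards) gives
     #P >= t!/4^t >= (t/12)^t for t = |T| >= I/2. *)

(* Loaded before MathComp: loaded after it, these rebind [^] on [nat] to [Nat.pow]. *)
From Stdlib Require Import Rdefinitions Rtrigo_def Rpower Exp_prop.
From HB Require Import structures.
From mathcomp Require Import all_boot all_order all_algebra.
From mathcomp Require Import reals Rstruct.
From mathcomp Require Import zify ring lra.
Set Implicit Arguments. Unset Strict Implicit. Unset Printing Implicit Defensive.
Import Order.TTheory GRing.Theory Num.Theory.

Section FactorialBound.

Local Open Scope ring_scope.

Lemma succ_pow_le (u : nat) : (u.+1 ^ u <= 3 * u ^ u)%N.
Proof.
case: u => [//|u]; rewrite -(@ler_nat R) natrM !natrX.
set x : R := u.+1%:R; have x_gt0 : 0 < x by rewrite ltr0n.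
have x_neq0 : x != 0 := lt0r_neq0 x_gt0.
have -> : u.+2%:R = x * (1 + x^-1) :> R by rewrite mulrDr mulr1 mulfV // natr1.
rewrite exprMn mulrC ler_pM2r ?exprn_gt0 //.
have exp_ge : 1 + x^-1 <= exp x^-1.
  by apply/ltW/RltP/exp_ineq1/eqP; rewrite invr_eq0.
apply: (@le_trans _ _ (exp x^-1 ^+ u.+1)).
  have base_ge0 : 0 <= 1 + x^-1 by rewrite addr_ge0 // invr_ge0 ltW.
  by rewrite lerXn2r // nnegrE // (le_trans base_ge0).
by rewrite expRX -[x^-1 *+ _]mulr_natr mulVf //; apply/RleP/exp_le_3.
Qed.

Lemma pow_le_fact (t : nat) : (t ^ t <= 3 ^ t * t`!)%N.
Proof.
elim: t => [//|t IH]; rewrite !expnS factS.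
apply: (@leq_trans (t.+1 * (3 * t ^ t))); first by rewrite leq_mul2l succ_pow_le orbT.
by rewrite mulnCA -!mulnA leq_mul2l mulnCA leq_mul2l IH !orbT.
Qed.

End FactorialBound.

Lemma double_count_le (S1 S2 K : finType) (X : {set S1}) (Y : {set S2})
    (D : S1 -> {set K}) (phi : S1 -> K -> S2) (a b : nat) :
  {in X, forall x, a <= #|D x|} ->
  {in X, forall x, {in D x &, injective (phi x)}} ->
  {in X, forall x, {in D x, forall k, phi x k \in Y}} ->
  {in Y, forall y, #|[set x in X | y \in phi x @: D x]| <= b} ->
  #|X| * a <= #|Y| * b.
Proof.
move=> Da phi_inj phiY Yb; rewrite -!sum_nat_const.
apply: (@leq_trans (\sum_(x in X) \sum_(y | y \in phi x @: D x) 1)).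
  by apply: leq_sum => x xX; rewrite sum1_card card_in_imset ?Da //; apply: phi_inj.
rewrite (exchange_big_dep (mem Y)) /=; last by move=> x y xX /imsetP[k kD ->]; apply: phiY.
by apply: leq_sum => y yY; rewrite sum1dep_card Yb.
Qed.

Lemma card_fibers_ge (T1 T2 : finType) (P : {set T1 * T2}) (A : {set T1}) a :
  {in A, forall u, a <= #|[set w | (u, w) \in P]|} -> #|A| * a <= #|P|.
Proof.
move=> Pa; rewrite -[#|P|]muln1.
apply: (double_count_le (D := fun u => [set w | (u, w) \in P]) (phi := pair)).
- exact: Pa.
- by move=> u _ w1 w2 _ _ [].
- by move=> u _ w; rewrite inE.
move=> p _; apply/card_le1_eqP => u1 u2.
by rewrite !inE => /andP[_ /imsetP[w1 _ ->]] /andP[_ /imsetP[w2 _]] [].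
Qed.

Lemma card_sep_ge (T : finType) (A : {set T}) (P : pred T) d :
  #|[set x in A | ~~ P x]| <= d -> #|A| - d <= #|[set x in A | P x]|.
Proof.
have splitA : #|[set x in A | P x]| + #|[set x in A | ~~ P x]| = #|A|.
  rewrite -(cardsID [set x | P x] A).
  by congr (_ + _); apply: eq_card => x; rewrite !inE // andbC.
by rewrite -splitA; lia.
Qed.

Section Matchings.

Variables T1 T2 : finType.
Implicit Types (M P S F : {set T1 * T2}) (A : {set T1}) (B : {set T2}).

Definition matching M : bool :=
  [forall x in M, forall y in M, (x.1 == y.1) || (x.2 == y.2) ==> (x == y)].

Lemma matchingP M :
  reflect {in M &, forall x y, x.1 = y.1 \/ x.2 = y.2 -> x = y} (matching M).
Proof.
apply: (iffP forall_inP) => [mM x y xM yM xy | mM x xM].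
  have /forall_inP/(_ y yM)/implyP eq_xy := mM x xM.
  by apply/eqP/eq_xy; case: xy => ->; rewrite eqxx ?orbT.
by apply/forall_inP => y yM; apply/implyP => /orP[] /eqP xy; apply/eqP/mM => //; tauto.
Qed.

Lemma matching_inj1 M : matching M -> {in M &, injective (@fst T1 T2)}.
Proof. by move/matchingP => mM x y xM yM xy; apply: mM => //; left. Qed.

Lemma matching_inj2 M : matching M -> {in M &, injective (@snd T1 T2)}.
Proof. by move/matchingP => mM x y xM yM xy; apply: mM => //; right. Qed.

Lemma card_matching_fst M : matching M -> #|fst @: M| = #|M|.
Proof. by move/matching_inj1/card_in_imset. Qed.

Lemma card_matching_snd M : matching M -> #|snd @: M| = #|M|.
Proof. by move/matching_inj2/card_in_imset. Qed.

Lemma matching_subset M P : M \subset P -> matching P -> matching M.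
Proof.
move=> MP /matchingP mP; apply/matchingP => x y xM yM.
by apply: mP; apply: (subsetP MP).
Qed.

Lemma matching_fst_notin M S e :
  matching M -> e \in M -> S \subset M -> e \notin S -> e.1 \notin fst @: S.
Proof.
move=> mM eM SM; apply: contra => /imsetP[x xS ex].
by rewrite (matching_inj1 mM eM (subsetP SM x xS) ex).
Qed.

Lemma matching_snd_notin M S e :
  matching M -> e \in M -> S \subset M -> e \notin S -> e.2 \notin snd @: S.
Proof.
move=> mM eM SM; apply: contra => /imsetP[x xS ex].
by rewrite (matching_inj2 mM eM (subsetP SM x xS) ex).
Qed.

Lemma matching_setU M P :
  matching M -> matching P ->
  [disjoint fst @: M & fst @: P] -> [disjoint snd @: M & snd @: P] ->
  matching (M :|: P).
Proof.
move=> /matchingP mM /matchingP mP dis1 dis2.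
have cross x y : x \in M -> y \in P -> x.1 = y.1 \/ x.2 = y.2 -> False.
  move=> xM yP [] xy.
    by have := disjointFr dis1 (imset_f fst xM); rewrite xy imset_f.
  by have := disjointFr dis2 (imset_f snd xM); rewrite xy imset_f.
apply/matchingP => x y /setUP[xM|xP] /setUP[yM|yP] xy.
- exact: mM.
- by case: (cross x y xM yP xy).
- by case: (cross y x yM xP); case: xy; [left|right].
- exact: mP.
Qed.

Lemma matching_set1 e : matching [set e].
Proof. by apply/matchingP => x y /set1P-> /set1P->. Qed.

Lemma matching_setU1 M e :
  matching M -> e.1 \notin fst @: M -> e.2 \notin snd @: M -> matching (e |: M).
Proof.
move=> mM e1 e2; rewrite setUC; apply: matching_setU; rewrite ?matching_set1 //.
  by rewrite imset_set1 disjoint_sym disjoints1.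
by rewrite imset_set1 disjoint_sym disjoints1.
Qed.

Definition switch M (f g : T1 * T2) := (f.1, g.2) |: ((g.1, f.2) |: (M :\ f :\ g)).

Lemma switch_subset M S (f g : T1 * T2) :
  M :\ f \subset S -> (f.1, g.2) \in S -> (g.1, f.2) \in S -> switch M f g \subset S.
Proof.
move=> MS e1S e2S; rewrite /switch !subUset !sub1set e1S e2S /=.
exact: subset_trans (subsetDl _ _) MS.
Qed.

Lemma subset_switch M (f g : T1 * T2) : M :\ f :\ g \subset switch M f g.
Proof. exact: subset_trans (subsetU1 _ _) (subsetU1 _ _). Qed.

Lemma switch_new1 M (f g : T1 * T2) : (f.1, g.2) \in switch M f g.
Proof. exact: setU11. Qed.

Lemma switch_new2 M (f g : T1 * T2) : (g.1, f.2) \in switch M f g.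
Proof. by rewrite /switch setU1r ?setU11. Qed.

Section Switch.

Variables (M : {set T1 * T2}) (f g : T1 * T2).
Hypotheses (mM : matching M) (fM : f \in M) (gM : g \in M) (fg : f != g).

Let core := M :\ f :\ g.

Let core_sub : core \subset M.
Proof. by apply/subsetP => x /setD1P[_ /setD1P[]]. Qed.

Let f_core : f \notin core. Proof. by rewrite !inE eqxx andbF. Qed.
Let g_core : g \notin core. Proof. by rewrite !inE eqxx. Qed.

Let M_eq : M = f |: (g |: core).
Proof. by rewrite /core setD1K ?setD1K // !inE eq_sym fg. Qed.

Let fst_neq : f.1 != g.1.
Proof. exact: contra_neq (matching_inj1 mM fM gM) fg. Qed.

Let snd_neq : f.2 != g.2.
Proof. exact: contra_neq (matching_inj2 mM fM gM) fg. Qed.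

Lemma switch_matching : matching (switch M f g).
Proof.
have m_core := matching_subset core_sub mM.
apply: matching_setU1; last 2 first.
- by rewrite imsetU1 !inE negb_or fst_neq (matching_fst_notin mM fM).
- by rewrite imsetU1 !inE negb_or eq_sym snd_neq (matching_snd_notin mM gM).
apply: matching_setU1 => //.
  exact: (matching_fst_notin mM gM).
exact: (matching_snd_notin mM fM).
Qed.

Let new1_notin : (f.1, g.2) \notin M.
Proof.
apply/negP => /(matching_inj1 mM)/(_ fM erefl) eqf.
by move: snd_neq; rewrite -eqf eqxx.
Qed.

Let new2_notin : (g.1, f.2) \notin M.
Proof.
apply/negP => /(matching_inj1 mM)/(_ gM erefl) eqg.
by move: snd_neq; rewrite -eqg eqxx.
Qed.

Let new1_core : (f.1, g.2) \notin core.
Proof. exact: contra (subsetP core_sub _) new1_notin. Qed.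

Let new2_core : (g.1, f.2) \notin core.
Proof. exact: contra (subsetP core_sub _) new2_notin. Qed.

Lemma card_switch : #|switch M f g| = #|M|.
Proof.
rewrite [in RHS]M_eq /switch -/core !cardsU1 !in_setU1 (negbTE new1_core) (negbTE new2_core).
by rewrite (negbTE f_core) (negbTE g_core) xpair_eqE (negbTE fst_neq) (negbTE fg).
Qed.

Lemma fst_switch : fst @: switch M f g = fst @: M.
Proof. by rewrite [in RHS]M_eq /switch !imsetU1. Qed.

Lemma snd_switch : snd @: switch M f g = snd @: M.
Proof. by rewrite [in RHS]M_eq /switch !imsetU1 /= setUCA. Qed.

Lemma switchK : switch (switch M f g) (f.1, g.2) (g.1, f.2) = M.
Proof.
rewrite [RHS]M_eq /switch -/core /= -!surjective_pairing setU1K ?setU1K //.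
by rewrite in_setU1 negb_or new1_core xpair_eqE negb_and fst_neq.
Qed.

End Switch.

Section Replace.

Variables (M T P : {set T1 * T2}).
Hypotheses (mM : matching M) (TM : T \subset M) (PT : P \subset setX (fst @: T) (snd @: T)).

Let old_out x : x \in M :\: T -> (x.1 \notin fst @: T) && (x.2 \notin snd @: T).
Proof.
case/setDP=> xM xT.
by rewrite (matching_fst_notin mM xM TM xT) (matching_snd_notin mM xM TM xT).
Qed.

Let new_in x : x \in P -> (x.1 \in fst @: T) && (x.2 \in snd @: T).
Proof. by move/(subsetP PT); rewrite inE. Qed.

Lemma replace_old : [set x in (M :\: T) :|: P | x.1 \notin fst @: T] = M :\: T.
Proof.
apply/setP => x; rewrite in_set in_setU.
have [/old_out/andP[-> _] // | _] := boolP (x \in M :\: T).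
by have [/new_in/andP[-> _] |] := boolP (x \in P).
Qed.

Lemma replace_new : [set x in (M :\: T) :|: P | x.1 \in fst @: T] = P.
Proof.
apply/setP => x; rewrite in_set in_setU.
have [/new_in/andP[-> _] | _] := boolP (x \in P); first by rewrite orbT.
by have [/old_out/andP[/negbTE -> _] |] := boolP (x \in M :\: T); rewrite ?andbF.
Qed.

Lemma disjoint_replace : [disjoint M :\: T & P].
Proof.
rewrite disjoints_subset; apply/subsetP => x xMT; rewrite inE.
by apply: contraL (old_out xMT) => /new_in/andP[-> _].
Qed.

Lemma matching_replace : matching P -> matching ((M :\: T) :|: P).
Proof.
move=> mP; apply: matching_setU => //; first exact: matching_subset (subsetDl _ _) mM.
  rewrite disjoints_subset; apply/subsetP => _ /imsetP[x xMT ->]; rewrite inE.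
  by apply/imsetP => -[y /new_in/andP[y1 _] xy]; move: (old_out xMT); rewrite xy y1.
rewrite disjoints_subset; apply/subsetP => _ /imsetP[x xMT ->]; rewrite inE.
by apply/imsetP => -[y /new_in/andP[_ y2] xy]; move: (old_out xMT); rewrite xy y2 andbF.
Qed.

End Replace.

Lemma switch_inj M1 M2 (e f1 f2 : T1 * T2) :
  matching M1 -> matching M2 -> e \in M1 -> e \in M2 -> f1 \in M1 -> f2 \in M2 ->
  e != f1 -> e != f2 -> switch M1 e f1 = switch M2 e f2 -> M1 = M2 /\ f1 = f2.
Proof.
move=> mM1 mM2 eM1 eM2 f1M f2M ef1 ef2 eq_sw.
have mY := switch_matching mM2 eM2 f2M ef2.
have new1 : (e.1, f1.2) \in switch M2 e f2 by rewrite -eq_sw switch_new1.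
have new2 : (f1.1, e.2) \in switch M2 e f2 by rewrite -eq_sw switch_new2.
have [eq_f2] := matching_inj1 mY new1 (switch_new1 _ _ _) erefl.
have [eq_f1] := matching_inj2 mY new2 (switch_new2 _ _ _) erefl.
have eq_f : f1 = f2 by rewrite [f1]surjective_pairing eq_f1 eq_f2 -surjective_pairing.
subst f2; split=> //.
by rewrite -(switchK mM1 eM1 f1M ef1) -(switchK mM2 eM2 f2M ef2) eq_sw.
Qed.

Section SwitchExtend.

Variables (M : {set T1 * T2}) (e f : T1 * T2).
Hypotheses (mM : matching M) (fM : f \in M).
Hypotheses (e1_free : e.1 \notin fst @: M) (e2_free : e.2 \notin snd @: M).

Let eM : e \notin M. Proof. by apply: contra e1_free; apply: imset_f. Qed.
Let m_eM : matching (e |: M). Proof. exact: matching_setU1. Qed.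
Let f_eM : f \in e |: M. Proof. exact: setU1r. Qed.
Let ef : e != f. Proof. by apply: contraNneq eM => ->. Qed.

Lemma matching_switch_setU1 : matching (switch (e |: M) e f).
Proof. exact: switch_matching m_eM (setU11 _ _) f_eM ef. Qed.

Lemma card_switch_setU1 : #|switch (e |: M) e f| = #|M|.+1.
Proof. by rewrite card_switch ?setU11 // cardsU1 eM. Qed.

Lemma fst_switch_setU1 : fst @: switch (e |: M) e f = e.1 |: fst @: M.
Proof. by rewrite fst_switch ?setU11 // imsetU1. Qed.

Lemma snd_switch_setU1 : snd @: switch (e |: M) e f = e.2 |: snd @: M.
Proof. by rewrite snd_switch ?setU11 // imsetU1. Qed.

Lemma switch_setU1K : switch (switch (e |: M) e f) (e.1, f.2) (f.1, e.2) :\ e = M.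
Proof. by rewrite switchK ?setU11 // setU1K. Qed.

End SwitchExtend.

Lemma switch_setU1_inj M (e f e' f' : T1 * T2) :
  matching M -> f \in M -> f' \in M ->
  e.1 \notin fst @: M -> e.2 \notin snd @: M ->
  e'.1 \notin fst @: M -> e'.2 \notin snd @: M ->
  switch (e |: M) e f = switch (e' |: M) e' f' -> (e, f) = (e', f').
Proof.
move=> mM fM f'M e1 e2 e'1 e'2 eq_sw.
have fst_eq : e.1 |: fst @: M = e'.1 |: fst @: M.
  by rewrite -(fst_switch_setU1 fM e1) eq_sw (fst_switch_setU1 f'M e'1).
have snd_eq : e.2 |: snd @: M = e'.2 |: snd @: M.
  by rewrite -(snd_switch_setU1 fM e1) eq_sw (snd_switch_setU1 f'M e'1).
have eq1 : e.1 = e'.1.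
  by move: (setU11 e.1 (fst @: M)); rewrite fst_eq => /setU1P[// | e1M]; rewrite e1M in e1.
have eq2 : e.2 = e'.2.
  by move: (setU11 e.2 (snd @: M)); rewrite snd_eq => /setU1P[// | e2M]; rewrite e2M in e2.
have m_sw := matching_switch_setU1 mM f'M e'1 e'2.
have new1 : (e.1, f.2) \in switch (e' |: M) e' f' by rewrite -eq_sw switch_new1.
have new2 : (f.1, e.2) \in switch (e' |: M) e' f' by rewrite -eq_sw switch_new2.
have [_ eq_f2] := matching_inj1 m_sw new1 (switch_new1 _ _ _) eq1.
have [eq_f1 _] := matching_inj2 m_sw new2 (switch_new2 _ _ _) eq2.
by rewrite [e]surjective_pairing [f]surjective_pairing eq1 eq2 eq_f1 eq_f2 -!surjective_pairing.
Qed.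

End Matchings.

Section MatchingCounts.

Variables (T1 T2 : finType) (F : {set T1 * T2}) (A : {set T1}) (B : {set T2}).

Definition matchings (k : nat) : {set {set T1 * T2}} :=
  [set M : {set T1 * T2} | [&& M \subset F, M \subset setX A B, matching M & #|M| == k]].

Lemma matchingsP k (M : {set T1 * T2}) :
  reflect [/\ M \subset F, M \subset setX A B, matching M & #|M| = k] (M \in matchings k).
Proof. by rewrite inE; apply: (iffP and4P) => [[? ? ? /eqP]|[? ? ? ->]]. Qed.

Lemma matchings0 : set0 \in matchings 0.
Proof.
apply/matchingsP; split; rewrite ?sub0set ?cards0 //.
by apply/matchingP => x y; rewrite inE.
Qed.

Definition near_complete d : Prop :=
  {in A, forall a, #|[set b in B | (a, b) \notin F]| <= d} /\
  {in B, forall b, #|[set a in A | (a, b) \notin F]| <= d}.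

Variables (n d : nat).
Hypotheses (cardA : #|A| = n) (cardB : #|B| = n) (nearF : near_complete d).

Lemma card_switchable_ge S a b :
  matching S -> S \subset setX A B -> a \in A -> b \in B ->
  #|S| - 2 * d <= #|[set f in S | ((a, f.2) \in F) && ((f.1, b) \in F)]|.
Proof.
move=> mS SAB aA bB; apply: card_sep_ge.
have bad1 : #|[set f in S | (a, f.2) \notin F]| <= d.
  apply: leq_trans (nearF.1 a aA).
  rewrite -(card_in_imset (f := snd)); last first.
    by move=> x y /setIdP[xS _] /setIdP[yS _]; apply: (matching_inj2 mS).
  apply/subset_leq_card/subsetP => _ /imsetP[f /setIdP[fS fF] ->].
  by move: (subsetP SAB f fS); rewrite !inE fF andbT => /andP[].
have bad2 : #|[set f in S | (f.1, b) \notin F]| <= d.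
  apply: leq_trans (nearF.2 b bB).
  rewrite -(card_in_imset (f := fst)); last first.
    by move=> x y /setIdP[xS _] /setIdP[yS _]; apply: (matching_inj1 mS).
  apply/subset_leq_card/subsetP => _ /imsetP[f /setIdP[fS fF] ->].
  by move: (subsetP SAB f fS); rewrite !inE fF andbT => /andP[].
apply: (@leq_trans #|[set f in S | (a, f.2) \notin F] :|: [set f in S | (f.1, b) \notin F]|).
  by apply/subset_leq_card/subsetP => f; rewrite !inE negb_and => /andP[-> /orP[]->]; rewrite ?orbT.
by apply: leq_trans (leq_card_setU _ _) _; rewrite mul2n -addnn leq_add.
Qed.

Lemma card_free1 k M : M \in matchings k -> #|A :\: fst @: M| = n - k.
Proof.
case/matchingsP => _ MAB mM cM; rewrite cardsDS ?card_matching_fst ?cardA ?cM //.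
by apply/subsetP => _ /imsetP[x xM ->]; move: (subsetP MAB x xM); rewrite inE => /andP[].
Qed.

Lemma card_free2 k M : M \in matchings k -> #|B :\: snd @: M| = n - k.
Proof.
case/matchingsP => _ MAB mM cM; rewrite cardsDS ?card_matching_snd ?cardB ?cM //.
by apply/subsetP => _ /imsetP[x xM ->]; move: (subsetP MAB x xM); rewrite inE => /andP[].
Qed.

Lemma matchings_extend k :
  #|matchings k| * ((n - k) * (n - k - d)) <= #|matchings k.+1| * k.+1.
Proof.
pose D (M : {set T1 * T2}) :=
  [set p | [&& p.1 \in A :\: fst @: M, p.2 \in B :\: snd @: M & p \in F]].
have notin_M M p : p \in D M -> p \notin M.
  by rewrite inE => /andP[/setDP[_ p1] _]; apply: contra p1; apply: imset_f.
apply: (double_count_le (D := D) (phi := fun M p => p |: M)).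
- move=> M Mk; rewrite -{1}(card_free1 Mk); apply: card_fibers_ge => u uA.
  have -> : [set w | (u, w) \in D M] = [set w in B :\: snd @: M | (u, w) \in F].
    by apply/setP => w; rewrite inE [in LHS]inE /= uA [in RHS]inE.
  rewrite -(card_free2 Mk); apply: card_sep_ge; apply: leq_trans (nearF.1 u _).
    by apply/subset_leq_card/subsetP => w; rewrite !inE => /andP[/andP[_ ->] ->].
  by case/setDP: uA.
- move=> M _ p q pD _ pq; have : p \in q |: M by rewrite -pq setU11.
  by case/setU1P => // pM; case/negP: (notin_M M p pD).
- move=> M /matchingsP[MF MAB mM cM] p pD; have pM := notin_M M p pD.
  move: pD; rewrite inE => /and3P[/setDP[pA p1] /setDP[pB p2] pF].
  apply/matchingsP; split.
  + by rewrite subUset sub1set pF.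
  + by rewrite subUset sub1set MAB inE pA pB.
  + exact: matching_setU1.
  + by rewrite cardsU1 pM cM.
- move=> M' /matchingsP[_ _ _ cM']; rewrite -cM'.
  apply: leq_trans (leq_imset_card (fun p => M' :\ p) M').
  apply/subset_leq_card/subsetP => M /setIdP[_ /imsetP[p pD ->]].
  by apply/imsetP; exists p; rewrite ?setU11 // setU1K ?notin_M.
Qed.

Lemma matchings_switch k :
  #|matchings k| * ((n - k) * (n - k) * (k - 2 * d)) <= #|matchings k.+1| * (k.+1 * k.+1).
Proof.
(* x.1 joins two vertices left free by M (it need not be an edge of F) and is switched
   with x.2 in M, so only the crossing pairs must lie in F. *)
pose D (M : {set T1 * T2}) := [set x : (T1 * T2) * (T1 * T2) |
  [&& x.1.1 \in A :\: fst @: M, x.1.2 \in B :\: snd @: M, x.2 \in M,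
      (x.1.1, x.2.2) \in F & (x.2.1, x.1.2) \in F]].
have DP M x : x \in D M ->
    [/\ x.1.1 \notin fst @: M, x.1.2 \notin snd @: M, x.2 \in M & x.1 \in setX A B] /\
    (x.1.1, x.2.2) \in F /\ (x.2.1, x.1.2) \in F.
  by rewrite !inE => /and5P[/andP[-> ->] /andP[-> ->] -> -> ->].
apply: (double_count_le (D := D) (phi := fun M x => switch (x.1 |: M) x.1 x.2)).
- move=> M Mk; have /matchingsP[_ MAB mM cM] := Mk.
  rewrite -{1}(card_free1 Mk) -(card_free2 Mk) -cardsX.
  apply: card_fibers_ge => p; rewrite inE => /andP[pA pB].
  have -> : [set f | (p, f) \in D M] = [set f in M | ((p.1, f.2) \in F) && ((f.1, p.2) \in F)].
    by apply/setP => f; rewrite [in LHS]inE [in LHS]inE /= pA pB [in RHS]inE.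
  rewrite -cM; apply: card_switchable_ge => //; [by case/setDP: pA | by case/setDP: pB].
- move=> M /matchingsP[_ _ mM _] x y /DP[[x11 x12 x2M _] _] /DP[[y11 y12 y2M _] _] eq_sw.
  have := switch_setU1_inj mM x2M y2M x11 x12 y11 y12 eq_sw.
  by rewrite -!surjective_pairing.
- move=> M /matchingsP[MF MAB mM cM] x /DP[[x11 x12 x2M x1AB] [new1F new2F]].
  have /andP[x11A x12B] : (x.1.1 \in A) && (x.1.2 \in B) by rewrite -in_setX -surjective_pairing.
  have /andP[x21A x22B] : (x.2.1 \in A) && (x.2.2 \in B).
    by rewrite -in_setX -surjective_pairing (subsetP MAB).
  have x1M : x.1 \notin M by apply: contra x11; apply: imset_f.
  apply/matchingsP; split.
  + by apply: switch_subset; rewrite ?setU1K.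
  + by apply: switch_subset; rewrite ?setU1K ?in_setX ?x11A ?x22B ?x21A ?x12B.
  + exact: matching_switch_setU1.
  + by rewrite card_switch_setU1 ?cM.
- move=> M' /matchingsP[_ _ _ cM']; rewrite -cM' -cardsX.
  apply: leq_trans (leq_imset_card (fun z => switch M' z.1 z.2 :\ (z.1.1, z.2.2)) _).
  apply/subset_leq_card/subsetP => M /setIdP[/matchingsP[_ _ mM _] /imsetP[x xD ->]].
  have [[x11 x12 x2M _] _] := DP M x xD.
  apply/imsetP; exists ((x.1.1, x.2.2), (x.2.1, x.1.2)).
    by rewrite in_setX switch_new1 switch_new2.
  by rewrite /= -[(x.1.1, x.1.2)]surjective_pairing switch_setU1K.
Qed.

Lemma matchings_succ k : 8 * d <= n -> k < n ->
  (n - k) * (n - k) * #|matchings k| <= 4 * k.+1 * #|matchings k.+1|.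
Proof.
move=> d_small kn; set s := #|matchings k|; set s' := #|matchings k.+1|.
have [k_small | k_large] := ltnP (2 * k) n.
  have ext := matchings_extend k; rewrite -/s -/s' in ext.
  have h : n - k <= 4 * (n - k - d) by lia.
  apply: (@leq_trans ((n - k) * (4 * (n - k - d)) * s)).
    by rewrite leq_mul2r leq_mul2l h !orbT.
  have -> : (n - k) * (4 * (n - k - d)) * s = 4 * (s * ((n - k) * (n - k - d))) by ring.
  by rewrite -mulnA leq_mul2l [k.+1 * _]mulnC ext orbT.
have sw := matchings_switch k; rewrite -/s -/s' in sw.
have h : k.+1 <= 4 * (k - 2 * d) by lia.
rewrite -(@leq_pmul2r k.+1) //.
apply: (@leq_trans ((n - k) * (n - k) * s * (4 * (k - 2 * d)))).
  by rewrite leq_mul2l h orbT.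
have -> : (n - k) * (n - k) * s * (4 * (k - 2 * d))
    = 4 * (s * ((n - k) * (n - k) * (k - 2 * d))) by ring.
have -> : 4 * k.+1 * s' * k.+1 = 4 * (s' * (k.+1 * k.+1)) by ring.
by rewrite leq_mul2l sw orbT.
Qed.

Lemma fact_le_card_matchings : 8 * d <= n -> n`! <= 4 ^ n * #|matchings n|.
Proof.
move=> d_small.
suff H k : k <= n -> n`! * n`! <= 4 ^ k * k`! * ((n - k)`! * (n - k)`!) * #|matchings k|.
  move: (H n (leqnn n)); rewrite subnn fact0 !muln1 -mulnA mulnCA.
  by rewrite leq_pmul2l ?fact_gt0.
elim: k => [_ | k IH kn].
  rewrite subn0 mul1n -[X in X <= _]muln1 leq_mul2l.
  by apply/orP; right; apply/card_gt0P; exists set0; apply: matchings0.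
apply: leq_trans (IH (ltnW kn)) _.
have em : n - k = (n - k.+1).+1 by lia.
have step := matchings_succ d_small kn; rewrite em in step.
rewrite em !factS expnS.
set m := n - k.+1; set s := #|matchings k|; set s' := #|matchings k.+1|.
have -> : 4 ^ k * k`! * (m.+1 * m`! * (m.+1 * m`!)) * s
    = (4 ^ k * k`! * (m`! * m`!)) * (m.+1 * m.+1 * s) by ring.
have -> : 4 * 4 ^ k * (k.+1 * k`!) * (m`! * m`!) * s'
    = (4 ^ k * k`! * (m`! * m`!)) * (4 * k.+1 * s') by ring.
by rewrite leq_mul2l step orbT.
Qed.

End MatchingCounts.

Lemma near_completeS (T1 T2 : finType) (F : {set T1 * T2}) (A A' : {set T1}) (B B' : {set T2}) d :
  A' \subset A -> B' \subset B -> near_complete F A B d -> near_complete F A' B' d.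
Proof.
move=> AA' BB' [nearA nearB]; split=> [a aA | b bB].
  apply: leq_trans (nearA a (subsetP AA' a aA)).
  by apply/subset_leq_card/subsetP => b; rewrite !inE => /andP[/(subsetP BB') -> ->].
apply: leq_trans (nearB b (subsetP BB' b bB)).
by apply/subset_leq_card/subsetP => a; rewrite !inE => /andP[/(subsetP AA') -> ->].
Qed.

Section PerfectMatchings.

Variables (n : nat) (F : edge_set n).

Definition pmatchings := matchings F [set: 'I_n] [set: 'I_n] n.

Definition npm (T : edge_set n) := #|[set M in pmatchings | T \subset M]|.

Lemma npm0 : npm set0 = #|pmatchings|.
Proof. by apply: eq_card => M; rewrite inE sub0set andbT. Qed.

Lemma pmatchings_perfect M : M \in pmatchings -> perfect_matching F M.
Proof.
case/matchingsP => MF _ mM cM; split => //.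
have deg_one (p : 'I_n * 'I_n -> 'I_n) v : {in M &, injective p} -> #|p @: M| = n ->
    #|[set e in M | p e == v]| = 1.
  move=> p_inj cpM; have : v \in p @: M.
    suff -> : p @: M = setT by rewrite in_setT.
    by apply/eqP; rewrite eqEcard subsetT cardsT card_ord cpM leqnn.
  case/imsetP => x xM ->; apply/eqP/cards1P; exists x; apply/setP => e.
  by rewrite !inE; apply/andP/eqP => [[eM /eqP /p_inj ->] // | ->]; rewrite xM eqxx.
split => v; apply: deg_one; rewrite ?card_matching_fst ?card_matching_snd //.
  exact: matching_inj1.
exact: matching_inj2.
Qed.

Lemma deg0E u : deg0 F u = #|[set w | (u, w) \in F]|.
Proof.
rewrite /deg0 (_ : [set e in F | e.1 == u] = pair u @: [set w | (u, w) \in F]).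
  by rewrite card_imset // => w1 w2 [].
apply/setP => -[u' w]; rewrite !inE /=.
apply/andP/imsetP => [[uwF /eqP eq_u] | [w' w'F [-> ->]]].
  by subst u'; exists w; rewrite ?inE.
by rewrite inE in w'F; rewrite w'F eqxx.
Qed.

Lemma deg1E w : deg1 F w = #|[set u | (u, w) \in F]|.
Proof.
rewrite /deg1 (_ : [set e in F | e.2 == w] = (pair^~ w) @: [set u | (u, w) \in F]).
  by rewrite card_imset // => u1 u2 [].
apply/setP => -[u w']; rewrite !inE /=.
apply/andP/imsetP => [[uwF /eqP eq_w] | [u' u'F [-> ->]]].
  by subst w'; exists u; rewrite ?inE.
by rewrite inE in u'F; rewrite u'F eqxx.
Qed.

Lemma near_complete_of_deg d A B :
  (forall u, n <= deg0 F u + d) -> (forall w, n <= deg1 F w + d) -> near_complete F A B d.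
Proof.
have compl_le (X : {set 'I_n}) : n <= #|X| + d -> #|~: X| <= d.
  by have := cardsC X; rewrite card_ord; lia.
move=> deg0_ge deg1_ge; split=> [a _ | b _].
  apply: leq_trans (compl_le [set w | (a, w) \in F] _); last by rewrite -deg0E.
  by apply/subset_leq_card/subsetP => w; rewrite !inE => /andP[].
apply: leq_trans (compl_le [set u | (u, b) \in F] _); last by rewrite -deg1E.
by apply/subset_leq_card/subsetP => u; rewrite !inE => /andP[].
Qed.

Lemma subsetXT (M : edge_set n) : M \subset setX [set: 'I_n] [set: 'I_n].
Proof. by apply/subsetP => x; rewrite !inE. Qed.

Lemma npm_setD1 d (T : edge_set n) e : near_complete F setT setT d -> e \in T ->
  npm T * (n - #|T| - 2 * d) <= npm (T :\ e).
Proof.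
move=> nearF eT; rewrite -[npm (T :\ e)]muln1.
apply: (double_count_le
  (D := fun M => [set f in M :\: T | ((e.1, f.2) \in F) && ((f.1, e.2) \in F)])
  (phi := fun M f => switch M e f)).
- move=> M /setIdP[/matchingsP[_ _ mM cM] TM].
  have cD : #|M :\: T| = n - #|T| by rewrite cardsDS // cM.
  rewrite -cD; apply: (card_switchable_ge nearF); rewrite ?inE ?subsetXT //.
  exact: matching_subset (subsetDl _ _) mM.
- move=> M /setIdP[/matchingsP[_ _ mM _] TM] f1 f2.
  move=> /setIdP[/setDP[f1M f1T] _] /setIdP[/setDP[f2M f2T] _].
  have eM := subsetP TM e eT.
  have ef1 : e != f1 by apply: contraNneq f1T => <-.
  have ef2 : e != f2 by apply: contraNneq f2T => <-.
  by move/(switch_inj mM mM eM eM f1M f2M ef1 ef2) => [].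
- move=> M /setIdP[/matchingsP[MF _ mM cM] TM] f /setIdP[/setDP[fM fT] /andP[new1F new2F]].
  have eM := subsetP TM e eT; have ef : e != f by apply: contraNneq fT => <-.
  apply/setIdP; split.
    apply/matchingsP; split; rewrite ?subsetXT ?switch_matching ?card_switch //.
    exact: switch_subset (subset_trans (subsetDl _ _) MF) new1F new2F.
  apply: subset_trans (subset_switch M e f); apply/subsetP => x /setD1P[xe xT].
  by rewrite !inE xe (subsetP TM x xT) !andbT; apply: contraNneq fT => <-.
- move=> Y _; apply/card_le1_eqP => M1 M2.
  move=> /setIdP[/setIdP[/matchingsP[_ _ mM1 _] TM1] /imsetP[f1 f1D ->]].
  move=> /setIdP[/setIdP[/matchingsP[_ _ mM2 _] TM2] /imsetP[f2 f2D eq_sw]].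
  move: f1D f2D; rewrite !inE => /andP[/andP[f1T f1M] _] /andP[/andP[f2T f2M] _].
  have ef1 : e != f1 by apply: contraNneq f1T => <-.
  have ef2 : e != f2 by apply: contraNneq f2T => <-.
  by case: (switch_inj mM1 mM2 (subsetP TM1 e eT) (subsetP TM2 e eT) f1M f2M ef1 ef2 eq_sw).
Qed.

Lemma npm_small d (T : edge_set n) : near_complete F setT setT d -> 16 * d <= n ->
  2 * #|T| <= n -> npm T * n ^ #|T| <= 4 ^ #|T| * npm set0.
Proof.
move=> nearF d_small; move cT: #|T| => t; elim: t T cT => [|t IH] T cT t_small.
  by move/cards0_eq: cT => ->; rewrite expn0 muln1 mul1n.
have /card_gt0P[e eT] : 0 < #|T| by rewrite cT.
have cTe : #|T :\ e| = t by move: cT; rewrite (cardsD1 e T) eT add1n => -[].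
have IHe : npm (T :\ e) * n ^ t <= 4 ^ t * npm set0 by apply: IH => //; lia.
have step := npm_setD1 nearF eT; rewrite cT in step.
set m := n - t.+1 - 2 * d; have h : n <= 4 * m by rewrite /m; lia.
apply: (@leq_trans (4 * (npm T * m) * n ^ t)).
  by rewrite expnS mulnA leq_mul2r mulnCA leq_mul2l h !orbT.
apply: (@leq_trans (4 * (npm (T :\ e) * n ^ t))).
  by rewrite -mulnA leq_mul2l leq_mul2r step !orbT.
by rewrite expnS -mulnA leq_mul2l IHe orbT.
Qed.

Lemma npm_large (T : edge_set n) :
  npm T * #|matchings F (fst @: T) (snd @: T) (#|T|)| <= npm set0.
Proof.
rewrite -[npm set0]muln1.
apply: (double_count_le (D := fun _ => matchings F (fst @: T) (snd @: T) (#|T|))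
                       (phi := fun M P => (M :\: T) :|: P)) => //.
- move=> M /setIdP[/matchingsP[_ _ mM _] TM] P1 P2 /matchingsP[_ P1T _ _] /matchingsP[_ P2T _ _].
  by move=> eqU; rewrite -(replace_new mM TM P1T) -(replace_new mM TM P2T) eqU.
- move=> M /setIdP[/matchingsP[MF _ mM cM] TM] P /matchingsP[PF PT mP cP].
  rewrite inE sub0set andbT; apply/matchingsP; split.
  + by rewrite subUset PF (subset_trans (subsetDl _ _) MF).
  + exact: subsetXT.
  + exact: matching_replace.
  + rewrite cardsU (disjoint_setI0 (disjoint_replace mM TM PT)) cards0 subn0.
    rewrite cardsDS // cM cP subnK //.
    by have := subset_leq_card TM; rewrite cM.
- move=> Y _; apply/card_le1_eqP => M1 M2.
  move=> /setIdP[/setIdP[/matchingsP[_ _ mM1 _] TM1] /imsetP[P1 /matchingsP[_ P1T _ _] eq1]].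
  move=> /setIdP[/setIdP[/matchingsP[_ _ mM2 _] TM2] /imsetP[P2 /matchingsP[_ P2T _ _] eq2]].
  have old_eq : M1 :\: T = M2 :\: T.
    by rewrite -(replace_old mM1 TM1 P1T) -(replace_old mM2 TM2 P2T) -eq1 -eq2.
  apply/setP => x; have [xT | xT] := boolP (x \in T).
    by rewrite (subsetP TM1 x xT) (subsetP TM2 x xT).
  by move/setP/(_ x): old_eq; rewrite !inE xT.
Qed.

Lemma npm_spread d (T : edge_set n) : near_complete F setT setT d -> 16 * d <= n ->
  npm T * n ^ #|T| <= 24 ^ #|T| * npm set0.
Proof.
move=> nearF d_small; set t := #|T|.
have [mT | not_mT] := boolP (matching T); last first.
  suff -> : npm T = 0 by [].
  apply: eq_card0 => M; rewrite inE; apply/andP => -[/matchingsP[_ _ mM _] TM].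
  by case/negP: not_mT; apply: matching_subset mM.
have [t_small | t_large] := leqP (2 * t) n.
  apply: leq_trans (npm_small nearF d_small t_small) _.
  by rewrite (_ : 24 = 4 * 6) // expnMn -mulnA leq_mul2l leq_pmull ?expn_gt0 ?orbT.
set s := #|matchings F (fst @: T) (snd @: T) t|.
have fact_le : t`! <= 4 ^ t * s.
  apply: (fact_le_card_matchings (d := d)); rewrite ?card_matching_fst ?card_matching_snd //.
    exact: near_completeS (subsetT _) (subsetT _) nearF.
  lia.
have n_le : n ^ t <= 2 ^ t * t ^ t by rewrite -expnMn leq_exp2r; lia.
apply: (@leq_trans (npm T * (2 ^ t * (3 ^ t * (4 ^ t * s))))).
  rewrite leq_mul2l (leq_trans n_le) ?orbT // leq_mul2l (leq_trans (pow_le_fact t)) ?orbT //.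
  by rewrite leq_mul2l fact_le orbT.
have -> : npm T * (2 ^ t * (3 ^ t * (4 ^ t * s))) = 24 ^ t * (npm T * s).
  by rewrite (_ : 24 = 2 * 3 * 4) // !expnMn; ring.
by rewrite leq_mul2l npm_large orbT.
Qed.

Lemma pmatchings_gt0 d : near_complete F setT setT d -> 8 * d <= n -> 0 < #|pmatchings|.
Proof.
move=> nearF d_small.
have := fact_le_card_matchings (cardsT _) (cardsT _) nearF; rewrite card_ord => /(_ d_small).
by move/(leq_trans (fact_gt0 n)); rewrite muln_gt0 => /andP[].
Qed.

End PerfectMatchings.

Local Open Scope ring_scope.

Definition uniform_pm n (F : edge_set n) : {ffun edge_set n -> R} :=
  [ffun M => if M \in pmatchings F then #|pmatchings F|%:R^-1 else 0].

Lemma uniform_pm_distribution n (F : edge_set n) :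
  (0 < #|pmatchings F|)%N -> pm_distribution F (uniform_pm F).
Proof.
move=> N_gt0; have N_neq0 : #|pmatchings F|%:R != 0 :> R by rewrite pnatr_eq0 -lt0n.
split; [|split].
- by move=> M; rewrite ffunE; apply/RleP; case: ifP; rewrite ?invr_ge0 ?ler0n.
- under eq_bigr do rewrite ffunE.
  by rewrite -big_mkcond /= sumr_const -[LHS]mulr_natr mulVf.
- by move=> M; rewrite ffunE; case: ifP => [/pmatchings_perfect | _ []].
Qed.

Lemma uniform_pm_spread n (F : edge_set n) (c : nat) :
  (0 < #|pmatchings F|)%N ->
  (forall T, npm F T * n ^ #|T| <= c ^ #|T| * npm F set0)%N ->
  spread F (uniform_pm F) (c%:R * n%:R^-1).
Proof.
move=> N_gt0 npm_le T _; apply/RleP.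
under eq_bigr do rewrite ffunE.
rewrite -big_mkcondr (eq_bigl (fun M => M \in [set M in pmatchings F | T \subset M])); last first.
  by move=> M; rewrite inE andbC.
rewrite sumr_const -/(npm F T) -[_ *+ npm F T]mulr_natr mulrC ler_pdivrMr ?ltr0n // -npm0.
have [T0 | T_gt0] := posnP #|T|.
  by have := npm_le T; rewrite T0 expr0 mul1r ler_nat !expn0 muln1 mul1n.
have n_gt0 : (0 < n)%N by case/card_gt0P: T_gt0 => -[i _] _; exact: leq_ltn_trans (ltn_ord i).
rewrite exprMn exprVn mulrAC ler_pdivlMr ?exprn_gt0 ?ltr0n //.
by rewrite -!natrX -!natrM ler_nat.
Qed.

Lemma deficiency_le (lambda : R) (n k : nat) :
  lambda <= 16^-1 -> (1 - lambda) * n%:R <= k%:R -> (n <= k + n %/ 16)%N.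
Proof.
move=> lambda_le deg_ge.
suff : (15 * n <= 16 * k)%N by lia.
rewrite -(@ler_nat R) !natrM (le_trans _ (ler_wpM2l _ deg_ge)) //.
rewrite mulrA ler_wpM2r //; lra.
Qed.

Theorem corollary3p4 :
  exists (lambda0 C : R), 0 < lambda0 /\ 0 < C /\
  forall (lambda : R), 0 < lambda -> lambda <= lambda0 ->
  forall (I : nat) (F : edge_set I),
    (forall u : 'I_I, (1 - lambda) * I%:R <= (deg0 F u)%:R) ->
    (forall w : 'I_I, (1 - lambda) * I%:R <= (deg1 F w)%:R) ->
    exists mu : {ffun edge_set I -> R},
      pm_distribution F mu /\ spread F mu (C * (I%:R)^-1).
Proof.
exists 16^-1, 24%:R; split; first by rewrite invr_gt0 ltr0n.
split; first by rewrite ltr0n.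
move=> lambda _ lambda_le n F deg0_ge deg1_ge; set d := (n %/ 16)%N.
have nearF : near_complete F setT setT d.
  apply: near_complete_of_deg => v; apply: deficiency_le lambda_le _.
    exact: deg0_ge.
  exact: deg1_ge.
have d_small : (16 * d <= n)%N by rewrite /d; lia.
have N_gt0 : (0 < #|pmatchings F|)%N by apply: (pmatchings_gt0 nearF); lia.
exists (uniform_pm F); split; first exact: uniform_pm_distribution.
by apply: uniform_pm_spread => // T; apply: npm_spread nearF d_small.
Qed.
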